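(* Let $f:\mathbb{R}^n\to\mathbb{R}^n$ and let $x^*\in\mathbb{R}^n$ satisfy $f(x^* )=0$. Assume $f$ is continuously differentiable in a neighborhood $B_1(x^* )$ of $x^*$ and that the Jacobian $J_f(x^* )$ is nonsingular. Consider a nonlinear Krylov (nlKrylov) iteration as described in the context, generating iterates $x_{j+1}=x_j+P_jy_j$ with $y_j=-V_j^Tf(x_j)$, where $V_j^TV_j=I_{n_j}$. Define $W_j=J_f(x_j)P_j-V_j$, $$\mu_j=\frac{\|W_jy_j\|}{\|f(x_j)\|},\qquad \eta_j=\frac{\|f(x_j)+V_jy_j\|}{\|f(x_j)\|},$$ and suppose there is a constant $c$ with $0<c<1$ such that for all $j$, $$c_j:=\mu_j+\eta_j\le c<1.$$ Then there exists a neighborhood $B_0(x^* )$ of $x^*$ such that for every initial guess $x_0\in B_0(x^* )$ the nlKrylov iterates $\{x_j\}_j$ converge to $x^*$.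
   Context: Norms are Euclidean 2-norms and $J_f(x)$ denotes the Jacobian of $f$ at $x$. An nlKrylov method solves $f(x)=0$ as follows: at iteration $j$ it holds two matrices $P_j,V_j\in\mathbb{R}^{n\times n_j}$ (search directions and approximations of $J_f(x_j)P_j$, respectively, built from previous iterates, Jacobian-vector products and an inner linear solver applied to $J_f(x_j)\hat p=-f(x_j)$), where the columns of $V_j$ are orthonormal, i.e. $V_j^TV_j=I_{n_j}$. With residual $r_j=-f(x_j)$, the method sets $y_j=V_j^Tr_j=-V_j^Tf(x_j)$ and updates $x_{j+1}=x_j+P_jy_j$. The matrix $W_j=J_f(x_j)P_j-V_j$ measures the mismatch between $V_j$ and $J_f(x_j)P_j$. *)

From HB Require Import structures.
From mathcomp Require Import all_boot all_order all_algebra.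
From mathcomp Require Import all_classical all_reals all_analysis.
Set Implicit Arguments. Unset Strict Implicit. Unset Printing Implicit Defensive.
Import Order.TTheory GRing.Theory Num.Theory.
Import numFieldNormedType.Exports.
Local Open Scope ring_scope.

Definition enorm {R : realType} {m n : nat} (A : 'M[R]_(m, n)) : R :=
  Num.sqrt (\sum_(i < m) \sum_(j < n) A i j ^+ 2).

(* Jf f x is the usual Jacobian J_f(x) (acting on column vectors);
   MathComp's [jacobian] acts on row vectors, hence the transpose. *)
Definition Jf {R : realType} {n : nat} (f : 'rV[R]_n -> 'rV[R]_n) (x : 'rV[R]_n)
  : 'M[R]_n := (jacobian f x)^T.

From HB Require Import structures.
From mathcomp Require Import all_boot all_order all_algebra.
From mathcomp Require Import all_classical all_reals all_analysis.
From mathcomp Require Import ring lra.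
Set Implicit Arguments. Unset Strict Implicit. Unset Printing Implicit Defensive.
Import Order.TTheory GRing.Theory Num.Theory.
Import numFieldNormedType.Exports.
Local Open Scope classical_set_scope.
Local Open Scope ring_scope.

(** Measure the error [e_j = x_j - xstar] by [|A e_j|], where [A = J_f(xstar)].
    Near [xstar], differentiability gives [f(x_j) = A e_j + o(e_j)] and continuity of
    the Jacobian gives [J_f(x_j) = A + o(1)], while the step [s_j = P_j y_j] has
    linear residual [f(x_j) + J_f(x_j) s_j = (f(x_j) + V_j y_j) + W_j y_j], of size
    at most [c |f(x_j)|].  Writing [A (e_j + s_j)] as this residual minus the two
    perturbation terms shows that the error contracts by the factor [(1 + c)/2]
    while [x_j] is close to [xstar]; since it never grows, the iterates stay close
    and converge geometrically. *)

Section FrobeniusNorm.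
Variable R : realType.

Lemma sumr_sqr_ge0 (I : finType) (a : I -> R) : 0 <= \sum_i a i ^+ 2.
Proof. by rewrite sumr_ge0 // => i _; rewrite sqr_ge0. Qed.

Lemma sum_mul_sqr_le (I : finType) (a b : I -> R) :
  (\sum_i a i * b i) ^+ 2 <= (\sum_i a i ^+ 2) * (\sum_i b i ^+ 2).
Proof.
set D := \sum_i \sum_j (a i ^+ 2 * b j ^+ 2 - a i * b i * (a j * b j)).
rewrite -subr_ge0.
have -> : (\sum_i a i ^+ 2) * (\sum_i b i ^+ 2) - (\sum_i a i * b i) ^+ 2 = D.
  rewrite expr2 !big_distrl -sumrB; apply: eq_bigr => i _.
  by rewrite !big_distrr -sumrB.
(* Lagrange's identity: [D] is half a sum of squares. *)
have D2 : D + D = \sum_i \sum_j (a i * b j - a j * b i) ^+ 2.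
  rewrite {2}/D exchange_big -big_split; apply: eq_bigr => i _.
  by rewrite -big_split; apply: eq_bigr => j _ /=; ring.
have : 0 <= D + D by rewrite D2 sumr_ge0 // => i _; apply: sumr_sqr_ge0.
lra.
Qed.

Lemma sum_mul_le_sqrt (I : finType) (a b : I -> R) :
  \sum_i a i * b i <= Num.sqrt (\sum_i a i ^+ 2) * Num.sqrt (\sum_i b i ^+ 2).
Proof.
rewrite -sqrtrM ?sumr_sqr_ge0 // (le_trans (ler_norm _)) // -sqrtr_sqr.
by rewrite ler_sqrt ?mulr_ge0 ?sumr_sqr_ge0 ?sum_mul_sqr_le.
Qed.

Lemma enorm_pairE m n (A : 'M[R]_(m, n)) :
  enorm A = Num.sqrt (\sum_(ij : 'I_m * 'I_n) A ij.1 ij.2 ^+ 2).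
Proof. by rewrite /enorm pair_bigA. Qed.

Lemma enorm_ge0 m n (A : 'M[R]_(m, n)) : 0 <= enorm A.
Proof. exact: sqrtr_ge0. Qed.

Lemma sqr_enorm m n (A : 'M[R]_(m, n)) : enorm A ^+ 2 = \sum_i \sum_j A i j ^+ 2.
Proof. by rewrite sqr_sqrtr // sumr_ge0 // => i _; apply: sumr_sqr_ge0. Qed.

Lemma sqr_enorm_pair m n (A : 'M[R]_(m, n)) :
  enorm A ^+ 2 = \sum_(ij : 'I_m * 'I_n) A ij.1 ij.2 ^+ 2.
Proof. by rewrite sqr_enorm pair_bigA. Qed.

Lemma enorm0 m n : enorm (0 : 'M[R]_(m, n)) = 0.
Proof. by rewrite enorm_pairE big1 ?sqrtr0 // => ij _; rewrite mxE expr0n. Qed.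

Lemma enormN m n (A : 'M[R]_(m, n)) : enorm (- A) = enorm A.
Proof. by rewrite !enorm_pairE; under eq_bigr do rewrite mxE sqrrN. Qed.

Lemma enorm_tr m n (A : 'M[R]_(m, n)) : enorm A^T = enorm A.
Proof. by rewrite /enorm exchange_big; under eq_bigr do under eq_bigr do rewrite mxE. Qed.

Lemma enormD m n (A B : 'M[R]_(m, n)) : enorm (A + B) <= enorm A + enorm B.
Proof.
rewrite -(@ler_pXn2r _ 2) ?nnegrE ?addr_ge0 ?enorm_ge0 // sqrrD !sqr_enorm_pair.
have := sum_mul_le_sqrt (fun ij : 'I_m * 'I_n => A ij.1 ij.2) (fun ij => B ij.1 ij.2).
rewrite -!enorm_pairE => cs.
have -> : \sum_(ij : 'I_m * 'I_n) (A + B) ij.1 ij.2 ^+ 2 =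
    \sum_ij A ij.1 ij.2 ^+ 2 + (\sum_ij A ij.1 ij.2 * B ij.1 ij.2) *+ 2
    + \sum_ij B ij.1 ij.2 ^+ 2.
  by rewrite -sumrMnl -!big_split; apply: eq_bigr => ij _; rewrite mxE sqrrD.
by rewrite lerD2r lerD2l lerMn2r cs orbT.
Qed.

Lemma enormB m n (A B : 'M[R]_(m, n)) : enorm (A - B) <= enorm A + enorm B.
Proof. by rewrite -(enormN B) enormD. Qed.

Lemma enormM m n p (A : 'M[R]_(m, n)) (B : 'M[R]_(n, p)) :
  enorm (A *m B) <= enorm A * enorm B.
Proof.
rewrite -(@ler_pXn2r _ 2) ?nnegrE ?mulr_ge0 ?enorm_ge0 // exprMn.
rewrite !sqr_enorm big_distrl; apply: ler_sum => i _; rewrite exchange_big big_distrr /=.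
by apply: ler_sum => k _; rewrite mxE sum_mul_sqr_le.
Qed.

Lemma mx_norm_le_enorm m n (A : 'M[R]_(m, n)) : `|A| <= enorm A.
Proof.
rewrite [leLHS]mx_normrE; apply: bigmax_le => [|ij _]; first exact: enorm_ge0.
rewrite -(@ler_pXn2r _ 2) ?nnegrE ?enorm_ge0 // real_normK ?num_real // sqr_enorm_pair.
by rewrite (bigD1 ij) //= lerDl sumr_ge0 // => ? _; exact: sqr_ge0.
Qed.

Lemma enorm_eq0 m n (A : 'M[R]_(m, n)) : enorm A = 0 -> A = 0.
Proof. by move=> A0; apply/eqP; rewrite -normr_le0 -A0 mx_norm_le_enorm. Qed.

Lemma enorm_le_mx_norm m n (A : 'M[R]_(m, n)) : enorm A <= (m * n).+1%:R * `|A|.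
Proof.
rewrite -(@ler_pXn2r _ 2) ?nnegrE ?enorm_ge0 ?mulr_ge0 // sqr_enorm_pair.
apply: (@le_trans _ _ (\sum_(ij : 'I_m * 'I_n) `|A| ^+ 2)).
  apply: ler_sum => ij _; rewrite -real_normK ?num_real // lerXn2r ?nnegrE //.
  by rewrite [leRHS]mx_normrE; apply/bigmax_geP; right; exists ij.
rewrite sumr_const card_prod !card_ord exprMn -[_ *+ (m * n)]mulr_natl ler_wpM2r ?sqr_ge0 //.
by rewrite -natrX ler_nat (leq_trans (leqnSn _)) // expnS expn1 leq_pmulr.
Qed.

End FrobeniusNorm.

Section ContractionStep.
Variables (R : realType) (n : nat).
Implicit Types (A J : 'M[R]_n) (v : 'cV[R]_n).

Lemma enorm_le_invmx A : A \in unitmx ->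
  exists2 K : R, 0 < K & forall v, enorm v <= K * enorm (A *m v).
Proof.
move=> A_unit; exists (enorm (invmx A) + 1) => [|v]; first by rewrite ltr_wpDl ?enorm_ge0.
rewrite -{1}(mulKmx A_unit v) (le_trans (enormM _ _)) // ler_wpM2r ?enorm_ge0 //.
by rewrite lerDl.
Qed.

Lemma enorm_le_perturbed A J (K eps : R) v :
  (forall v, enorm v <= K * enorm (A *m v)) -> 0 <= K ->
  enorm (J - A) <= eps -> 2 * (eps * K) <= 1 ->
  enorm v <= 2 * K * enorm (J *m v).
Proof.
move=> A_inv K_ge0 JA_le small.
have Av_le : enorm (A *m v) <= enorm (J *m v) + eps * enorm v.
  rewrite -[A *m v](subKr (J *m v)) -mulmxBl (le_trans (enormB _ _)) // lerD2l.
  by rewrite (le_trans (enormM _ _)) // ler_wpM2r ?enorm_ge0.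
have := le_trans (A_inv v) (ler_wpM2l K_ge0 Av_le).
have := enorm_ge0 v; have := enorm_ge0 (J *m v); nra.
Qed.

Lemma contraction_step A J (K eps c : R) (E S F : 'cV[R]_n) :
  (forall v, enorm v <= K * enorm (A *m v)) -> 0 <= K -> 0 <= c -> 0 <= eps ->
  20 * (eps * K) <= 1 - c ->
  enorm (F - A *m E) <= eps * enorm E -> enorm (J - A) <= eps ->
  enorm (F + J *m S) <= c * enorm F ->
  enorm (A *m (E + S)) <= (1 + c) / 2 * enorm (A *m E).
Proof.
move=> A_inv K_ge0 c_ge0 eps_ge0 small lin JA_le res.
set u := enorm (A *m E); set a := eps * K in small *.
have a_ge0 : 0 <= a by rewrite mulr_ge0.
have epsE_le : eps * enorm E <= a * u.
  by rewrite -mulrA ler_wpM2l // A_inv.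
have F_le : enorm F <= (1 + a) * u.
  rewrite -[F](subrK (A *m E)) (le_trans (enormD _ _)) // -/u; lra.
have JS_le : enorm (J *m S) <= (1 + c) * enorm F.
  rewrite -[J *m S](addKr F) (le_trans (enormD _ _)) // enormN; lra.
have epsS_le : eps * enorm S <= a * (2 * ((1 + c) * enorm F)).
  have S_le : enorm S <= 2 * K * enorm (J *m S).
    by apply: enorm_le_perturbed A_inv K_ge0 JA_le _; rewrite -/a; lra.
  apply: (le_trans (ler_wpM2l eps_ge0 S_le)).
  rewrite [leLHS](_ : _ = a * (2 * enorm (J *m S))); last by rewrite /a; ring.
  by rewrite !ler_wpM2l.
have AES_le : enorm (A *m (E + S)) <= c * enorm F + eps * enorm E + eps * enorm S.
  have -> : A *m (E + S) = (F + J *m S) - (F - A *m E) - (J - A) *m S.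
    rewrite mulmxDr mulmxBl (addrC F) (addrKA F) opprK.
    by rewrite (addrC (J *m S)) (addrKA (J *m S)) opprK.
  rewrite (le_trans (enormB _ _)) // (le_trans (lerD (enormB _ _) (enormM _ _))) //.
  by rewrite !lerD // ler_wpM2r ?enorm_ge0.
have u_ge0 : 0 <= u := enorm_ge0 _.
have c_le1 : c <= 1 by lra.
have a_le : a <= 1 / 20 by lra.
set b := c + 2 * a * (1 + c).
have bF_le : b * enorm F <= b * ((1 + a) * u) by rewrite ler_wpM2l // /b; nra.
have b_small : (b * (1 + a) + a) * u <= (1 + c) / 2 * u by rewrite ler_wpM2r // /b; nra.
rewrite /b in bF_le b_small; nra.
Qed.

Lemma krylov_residual_le m (r : 'rV[R]_n) J (P V : 'M[R]_(n, m)) (c : R) :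
  let y := - (V^T *m r^T) in
  enorm ((J *m P - V) *m y) / enorm r + enorm (r^T + V *m y) / enorm r <= c ->
  enorm (r^T + J *m (P *m y)) <= c * enorm r.
Proof.
move=> y; have [/enorm_eq0 r0 _|r_neq0] := eqVneq (enorm r) 0.
  (* Then [y = 0], and the hypothesis only says [0 <= c] since [x / 0 = 0]. *)
  by rewrite /y r0 trmx0 !mulmx0 oppr0 !mulmx0 addr0 !enorm0 mulr0.
have r_gt0 : 0 < enorm r by rewrite lt_def r_neq0 enorm_ge0.
rewrite -mulrDl ler_pdivrMr // => res.
have -> : r^T + J *m (P *m y) = (r^T + V *m y) + (J *m P - V) *m y.
  by rewrite mulmxA mulmxBl addrACA subrr addr0.
by rewrite (le_trans (enormD _ _)) // addrC.
Qed.

End ContractionStep.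

Section LocalEstimates.
Variable R : realType.

Lemma near_enorm_ball m n (x : 'M[R]_(m, n)) (P : 'M[R]_(m, n) -> Prop) :
  (\forall z \near x, P z) -> exists2 r : R, 0 < r & forall z, enorm (z - x) < r -> P z.
Proof.
move=> /nbhs_normP [r r_gt0 Pr]; exists r => // z zr; apply: Pr.
by rewrite /ball_ /= distrC (le_lt_trans (mx_norm_le_enorm _)).
Qed.

Lemma near_cvg_enorm (T : Type) (F : set_system T) {FF : Filter F} m n
    (g : T -> 'M[R]_(m, n)) (l : 'M[R]_(m, n)) (e : R) :
  g @ F --> l -> 0 < e -> \forall t \near F, enorm (g t - l) <= e.
Proof.
move=> /cvgrPdist_le gl e_gt0; set N := (m * n).+1%:R : R.
have N_gt0 : 0 < N by rewrite ltr0n.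
apply: filterS (gl _ (divr_gt0 e_gt0 N_gt0)) => t gt.
by rewrite (le_trans (enorm_le_mx_norm _)) // mulrC -ler_pdivlMr // distrC.
Qed.

Lemma near_linearization n (f : 'rV[R]_n -> 'rV[R]_n) x e :
  differentiable f x -> 0 < e ->
  \forall z \near x, enorm ((f z - f x)^T - Jf f x *m (z - x)^T) <= e * enorm (z - x).
Proof.
move=> df e_gt0; set N := (1 * n).+1%:R : R.
have N_gt0 : 0 < N by rewrite ltr0n.
move/eqaddoP: (diff_locally df) => /(_ (e / N) (divr_gt0 e_gt0 N_gt0)) near0.
apply/nbhs0P; apply: filterS near0 => h /= small.
rewrite !(addrC x h) addrK /Jf -trmx_mul -linearB /= enorm_tr /jacobian mul_rV_lin1.
rewrite (le_trans (enorm_le_mx_norm _)) // mulrC -ler_pdivlMr // mulrAC.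
apply: (le_trans _ (ler_wpM2l (ltW (divr_gt0 e_gt0 N_gt0)) (mx_norm_le_enorm h))).
by move: small; rewrite !fctE opprD addrA.
Qed.

End LocalEstimates.

Section LocalContraction.
Variable R : realType.

Lemma geometric_decay_sublevel (u : nat -> R) (t : R) :
  0 <= t <= 1 -> 0 <= u 0%N -> (forall j, u j <= u 0%N -> u j.+1 <= t * u j) ->
  forall j, u j <= t ^+ j * u 0%N.
Proof.
move=> /andP[t_ge0 t_le1] u0_ge0 step; elim=> [|j IH]; first by rewrite expr0 mul1r.
have uj_le : u j <= u 0%N by rewrite (le_trans IH) // ler_piMl // exprn_ile1.
by rewrite (le_trans (step j uj_le)) // exprS -mulrA ler_wpM2l.
Qed.

Lemma cvg_enorm_geometric m n (x : nat -> 'M[R]_(m, n)) (a : 'M[R]_(m, n)) (C t : R) :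
  0 <= t < 1 -> (forall j, enorm (x j - a) <= C * t ^+ j) -> x @ \oo --> a.
Proof.
move=> /andP[t_ge0 t_lt1] x_le; apply/subr_cvg0/norm_cvg0P.
apply: (squeeze_cvgr (f := cst 0) (h := fun j => C * t ^+ j)).
- by apply: nearW => j; rewrite normr_ge0 (le_trans (mx_norm_le_enorm _)).
- exact: cvg_cst.
- rewrite -(mulr0 C); apply: cvgM; first exact: cvg_cst.
  by apply: cvg_expr; rewrite ger0_norm.
Qed.

Lemma cvg_local_contraction n (A : 'M[R]_n) (K t rho : R) (x : nat -> 'rV[R]_n) xstar :
  0 <= K -> 0 <= t < 1 -> (forall v : 'cV[R]_n, enorm v <= K * enorm (A *m v)) ->
  K * enorm (A *m (x 0%N - xstar)^T) < rho ->
  (forall j, enorm (x j - xstar) < rho ->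
     enorm (A *m (x j.+1 - xstar)^T) <= t * enorm (A *m (x j - xstar)^T)) ->
  x @ \oo --> xstar.
Proof.
move=> K_ge0 /andP[t_ge0 t_lt1] A_inv u0_small step.
set u := fun j => enorm (A *m (x j - xstar)^T).
have d_le j : enorm (x j - xstar) <= K * u j by rewrite -enorm_tr A_inv.
have decay : forall j, u j <= t ^+ j * u 0%N.
  apply: geometric_decay_sublevel => [||j uj_le]; [by rewrite t_ge0 ltW | exact: enorm_ge0 |].
  by apply: step; rewrite (le_lt_trans (d_le j)) // (le_lt_trans _ u0_small) ?ler_wpM2l.
apply: (@cvg_enorm_geometric _ _ _ _ (K * u 0%N) t); first by rewrite t_ge0.
by move=> j; rewrite (le_trans (d_le j)) // -mulrA ler_wpM2l // mulrC.
Qed.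

Lemma contraction_basin n (A : 'M[R]_n) (K t rho : R) (xstar : 'rV[R]_n) :
  0 < K -> 0 < rho -> 0 <= t < 1 ->
  (forall v : 'cV[R]_n, enorm v <= K * enorm (A *m v)) ->
  exists2 r0 : R, 0 < r0 & forall x : nat -> 'rV[R]_n, enorm (x 0%N - xstar) < r0 ->
    (forall j, enorm (x j - xstar) < rho ->
       enorm (A *m (x j.+1 - xstar)^T) <= t * enorm (A *m (x j - xstar)^T)) ->
    x @ \oo --> xstar.
Proof.
move=> K_gt0 rho_gt0 t01 A_inv; set L := enorm A + 1.
have L_gt0 : 0 < L by rewrite ltr_wpDl ?enorm_ge0.
exists (rho / (K * L)) => [|x x0_near]; first by rewrite divr_gt0 ?mulr_gt0.
apply: (cvg_local_contraction (ltW K_gt0) t01 A_inv).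
have Ax0_le : enorm (A *m (x 0%N - xstar)^T) <= L * enorm (x 0%N - xstar).
  by rewrite (le_trans (enormM _ _)) // enorm_tr ler_wpM2r ?enorm_ge0 ?lerDl.
rewrite (le_lt_trans (ler_wpM2l (ltW K_gt0) Ax0_le)) // mulrA.
by rewrite mulrC -ltr_pdivlMr ?mulr_gt0.
Qed.

End LocalContraction.

Theorem theorem5p1 (R : realType) (n : nat) (f : 'rV[R]_n -> 'rV[R]_n)
  (xstar : 'rV[R]_n) :
  f xstar = 0 ->
  (exists r1 : R, 0 < r1 /\
     forall z : 'rV[R]_n, enorm (z - xstar) < r1 ->
       differentiable f z /\ (Jf f w @[w --> z] --> Jf f z)) ->
  Jf f xstar \in unitmx ->
  forall c : R, 0 < c -> c < 1 ->
  exists r0 : R, 0 < r0 /\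
    forall (k : nat -> nat) (P V : forall j : nat, 'M[R]_(n, k j))
           (x : nat -> 'rV[R]_n),
      enorm (x 0%N - xstar) < r0 ->
      (forall j, (V j)^T *m V j = 1%:M) ->
      (forall j, x j.+1 = x j + (P j *m (- ((V j)^T *m (f (x j))^T)))^T) ->
      (forall j,
        let y := - ((V j)^T *m (f (x j))^T) in
        let W := Jf f (x j) *m P j - V j in
        let mu := enorm (W *m y) / enorm (f (x j)) in
        let eta := enorm ((f (x j))^T + V j *m y) / enorm (f (x j)) in
        mu + eta <= c) ->
      x @ \oo --> xstar.
Proof.
move=> fx0 [r1 [r1_gt0 smooth]] A_unit c c_gt0 c_lt1.
have [|df cJ] := smooth xstar; first by rewrite subrr enorm0.
set A := Jf f xstar.
have [K K_gt0 A_inv] := enorm_le_invmx A_unit.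
set eps := (1 - c) / (20 * K).
have eps_gt0 : 0 < eps by rewrite divr_gt0 ?mulr_gt0 ?subr_gt0.
have epsK : 20 * (eps * K) = 1 - c by rewrite /eps mulrCA divfK ?mulf_neq0 ?gt_eqF.
have [rho rho_gt0 near_xstar] := near_enorm_ball
  (filterI (near_linearization df eps_gt0) (near_cvg_enorm cJ eps_gt0)).
have t01 : 0 <= (1 + c) / 2 < 1 by apply/andP; split; lra.
have [r0 r0_gt0 basin] := contraction_basin xstar K_gt0 rho_gt0 t01 A_inv.
exists r0; split => // k P V x /basin converges _ iter res.
apply: converges => j /near_xstar [lin jac].
rewrite iter addrAC linearD /= trmxK.
apply: (contraction_step (J := Jf f (x j)) (F := (f (x j))^T) A_inv
  (ltW K_gt0) (ltW c_gt0) (ltW eps_gt0)).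
- by rewrite epsK.
- by rewrite enorm_tr; rewrite fx0 subr0 in lin.
- exact: jac.
- by rewrite enorm_tr; apply: krylov_residual_le (res j).
Qed.
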